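(* Let $A\in\mathbb{R}^{n\times n}$, ${\mathbf w}\in\mathbb{R}^n$, $T>0$, and let $D$ be a linear differential operator in the time variable $t$ (for instance $\frac{\mathrm d}{\mathrm dt}$ or $\frac{\mathrm d^2}{\mathrm dt^2}$), acting componentwise on vector-valued functions. Let $\mathcal{V}_1\subseteq\mathcal{V}_2\subseteq\dots\subseteq\mathcal{V}_m\subseteq\mathcal{V}_{m+1}\subseteq\mathbb{R}^n$ be nested subspaces with $d_i=\dim(\mathcal{V}_i)$ (and $d_0=0$), such that ${\mathbf w}\in\mathcal{V}_1$ and $A\mathcal{V}_i\subseteq\mathcal{V}_{i+1}$ for all $i=1,\dots,m$. Let $\langle\cdot,\cdot\rangle_\ast$ be an inner product on $\mathcal{V}_{m+1}$, and let $U_{m+1}=[\mathcal{U}_1,\dots,\mathcal{U}_{m+1}]$, with $\mathcal{U}_j\in\mathbb{R}^{n\times b_j}$, $b_j=d_j-d_{j-1}$, be a nested basis of $\mathcal{V}_{m+1}$ that is orthonormal with respect to $\langle\cdot,\cdot\rangle_\ast$, i.e. $U_i=[\mathcal{U}_1,\dots,\mathcal{U}_i]$ has columns forming a $\langle\cdot,\cdot\rangle_\ast$-orthonormal basis of $\mathcal{V}_i$ for each $i\le m+1$. Let ${\mathbf y}_m:[0,T]\to\mathcal{V}_m$ be a (sufficiently differentiable) function whose residual \[ {\mathbf r}_m(t) := -D{\mathbf y}_m(t) - A{\mathbf y}_m(t) + {\mathbf w} \] satisfies the Galerkin condition $\langle {\mathbf v},{\mathbf r}_m(t)\rangle_\ast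 = 0$ for all ${\mathbf v}\in\mathcal{V}_m$ and all $t\in[0,T]$. Write ${\mathbf y}_m(t)=U_m{\mathbf x}_m(t)$ with ${\mathbf x}_m:[0,T]\to\mathbb{R}^{d_m}$. Then for all $t\in[0,T]$, \[ {\mathbf r}_m(t) = \mathcal{U}_{m+1}\boldsymbol{\beta}_m(t)\quad\text{with}\quad \boldsymbol{\beta}_m(t) = -\,\mathcal{U}_{m+1}^\ast A\,\mathcal{U}_m\,[{\mathbf x}_m(t)]_{d_{m-1}+1:d_m}. \]
   Context: For a matrix $W=[{\mathbf w}_1,\dots,{\mathbf w}_k]$ whose columns lie in $\mathcal{V}_{m+1}$, the adjoint $W^\ast$ with respect to $\langle\cdot,\cdot\rangle_\ast$ is the map sending ${\mathbf x}\in\mathcal{V}_{m+1}$ to the vector $(\langle{\mathbf w}_1,{\mathbf x}\rangle_\ast,\dots,\langle{\mathbf w}_k,{\mathbf x}\rangle_\ast)^{\top}\in\mathbb{R}^k$; thus $\mathcal{U}_{m+1}^\ast A\,\mathcal{U}_m$ is the $b_{m+1}\times b_m$ matrix with entries $\langle {\mathbf u}, A{\mathbf u}'\rangle_\ast$ for columns ${\mathbf u}$ of $\mathcal{U}_{m+1}$ and ${\mathbf u}'$ of $\mathcal{U}_m$ (well defined since $A\mathcal{V}_m\subseteq\mathcal{V}_{m+1}$). For a vector ${\mathbf v}$, $[{\mathbf v}]_{i:j}$ denotes the subvector of entries $i,i+1,\dots,j$. *)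

From HB Require Import structures.
From mathcomp Require Import all_boot all_order all_algebra.
Set Implicit Arguments. Unset Strict Implicit. Unset Printing Implicit Defensive.
Import Order.TTheory GRing.Theory Num.Theory.
Local Open Scope ring_scope.

Definition dimseq (R : fieldType) (n : nat) (V : nat -> {vspace 'cV[R]_n}) (i : nat)
  : nat := if i is 0 then 0%N else \dim (V i).

Definition compD (R : ringType) (n : nat) (D : (R -> R) -> (R -> R))
  (y : R -> 'cV[R]_n) : R -> 'cV[R]_n :=
  fun t => \col_i D (fun s => y s i 0) t.

From HB Require Import structures.
From mathcomp Require Import all_boot all_order all_algebra.
From Stdlib Require Import FunctionalExtensionality.
Set Implicit Arguments. Unset Strict Implicit. Unset Printing Implicit Defensive.
Import Order.TTheory GRing.Theory Num.Theory.
Local Open Scope ring_scope.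

(* The residual r_m(t) lies in V_{m+1}, so it is the sum of its Fourier
   coefficients <u_j, r_m(t)> along the orthonormal basis, and the Galerkin
   condition kills those with u_j in V_m.  A new basis vector u_j is orthogonal
   to V_m, which contains w and D y_m(t) (D only acts on the coordinates x_m),
   so <u_j, r_m(t)> = - <u_j, A y_m(t)> = - sum_k x_k <u_j, A u_k>; the terms
   with u_k in V_{m-1} vanish as well, because A V_{m-1} is contained in V_m. *)

Lemma big_nat_prefix0 (V : nmodType) (M N : nat) (F : nat -> V) :
  (forall k, (k < M)%N -> F k = 0) ->
  \sum_(0 <= k < N) F k = \sum_(M <= k < N) F k.
Proof.
move=> F0; have [MN | NM] := leqP M N.
  rewrite (big_cat_nat (leq0n M) MN) /= big1_seq ?add0r // => k.
  by rewrite mem_index_iota => /andP[_ /F0].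
rewrite [RHS]big_geq ?(ltnW NM) // big1_seq // => k.
by rewrite mem_index_iota => /andP[_ /leq_trans/(_ (ltnW NM))/F0].
Qed.

Lemma nested_subv (K : fieldType) (vT : vectType K) (V : nat -> {vspace vT}) m :
  (forall i, (1 <= i <= m)%N -> (V i <= V i.+1)%VS) ->
  forall i j, (0 < i)%N -> (i <= j <= m.+1)%N -> (V i <= V j)%VS.
Proof.
move=> V_nested i j i_gt0 /andP[ij jm].
pose D := [pred k | 0 < k <= m.+1]%N.
have iD : i \in D by rewrite inE i_gt0 (leq_trans ij jm).
have jD : j \in D by rewrite inE jm (leq_trans i_gt0 ij).
apply: (@homo_leq_in _ D V (fun U W => (U <= W)%VS) _ _ _ _ i j iD jD ij).
- exact: subvv.
- by move=> ? ? ?; apply: subv_trans.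
- move=> a b /andP[a0 _] /andP[_ bm] c /andP[ac cb].
  by rewrite inE (leq_trans a0 (ltnW ac)) (leq_trans (ltnW cb) bm).
- by move=> a /andP[a0 _] /andP[_ am]; apply: V_nested; rewrite a0.
Qed.

Lemma span_iota_sum (K : fieldType) (vT : vectType K) (u : nat -> vT) N v :
  v \in <<[seq u k | k <- iota 0 N]>>%VS ->
  exists c : nat -> K, v = \sum_(k < N) c k *: u k.
Proof.
elim: N v => [|N IH] v.
  by rewrite span_nil memv0 => /eqP->; exists (fun=> 0); rewrite big_ord0.
rewrite -addn1 iotaD map_cat span_cat span_seq1.
case/memv_addP=> _ /IH[c ->] [_ /vlineP[a ->] ->].
exists (fun k => if (k < N)%N then c k else a).
rewrite addn1 big_ord_recr /= ltnn; congr (_ + _).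
by apply: eq_bigr => k _; rewrite ltn_ord.
Qed.

Section InnerProductOnSubspace.
Variables (K : fieldType) (vT : vectType K) (W : {vspace vT}) (ip : vT -> vT -> K).
Hypothesis ip_linearl : forall (a : K) v1 v2 z, v1 \in W -> v2 \in W -> z \in W ->
  ip (a *: v1 + v2) z = a * ip v1 z + ip v2 z.
Hypothesis ipC : forall v1 v2, v1 \in W -> v2 \in W -> ip v1 v2 = ip v2 v1.

Lemma ip_linearr (a : K) z v1 v2 : z \in W -> v1 \in W -> v2 \in W ->
  ip z (a *: v1 + v2) = a * ip z v1 + ip z v2.
Proof.
move=> zW v1W v2W; have v12W : a *: v1 + v2 \in W by rewrite rpredD ?memvZ.
by rewrite ipC // ip_linearl // ![ip _ z]ipC.
Qed.

Lemma ip0r z : z \in W -> ip z 0 = 0.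
Proof.
move=> zW; have := ip_linearr 1 zW (mem0v W) (mem0v W).
by rewrite scale1r addr0 mul1r => /(congr1 (fun y => y - ip z 0)); rewrite subrr addrK.
Qed.

Lemma ip_sumr (I : Type) (r : seq I) (c : I -> K) (f : I -> vT) z :
  z \in W -> (forall k, f k \in W) ->
  ip z (\sum_(k <- r) c k *: f k) = \sum_(k <- r) c k * ip z (f k).
Proof.
move=> zW fW; elim: r => [|a r IH]; first by rewrite !big_nil ip0r.
rewrite !big_cons ip_linearr ?IH //.
by apply: rpred_sum => k _; apply: memvZ.
Qed.

Section OrthonormalFamily.
Variables (u : nat -> vT) (N : nat).
Hypothesis u_W : forall k, (k < N)%N -> u k \in W.
Hypothesis u_orthonormal : forall k l, (k < N)%N -> (l < N)%N ->
  ip (u k) (u l) = (k == l)%:R.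

Lemma ip_orthonormal_sum M j (c : nat -> K) : (M <= N)%N -> (j < N)%N ->
  ip (u j) (\sum_(k < M) c k *: u k) = (j < M)%:R * c j.
Proof.
move=> MN jN; have uM_W (k : 'I_M) : u k \in W by apply/u_W/(leq_trans (ltn_ord k)).
rewrite ip_sumr ?u_W //.
under eq_bigr => k _ do rewrite u_orthonormal ?(leq_trans (ltn_ord k)) //.
have [jM | Mj] := ltnP j M.
  rewrite (bigD1 (Ordinal jM)) //= eqxx mulr1 mul1r big1 ?addr0 // => k.
  by rewrite -val_eqE eq_sym => /negbTE /= ->; rewrite mulr0.
rewrite mul0r big1 // => k _.
by rewrite gtn_eqF ?mulr0 // (leq_trans (ltn_ord k)).
Qed.

Lemma ip_orthonormal_span_eq0 M j v : (M <= j < N)%N ->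
  v \in <<[seq u k | k <- iota 0 M]>>%VS -> ip (u j) v = 0.
Proof.
move=> /andP[Mj jN] /span_iota_sum[c ->].
by rewrite ip_orthonormal_sum ?(leq_trans Mj (ltnW jN)) // ltnNge Mj mul0r.
Qed.

Lemma ip_orthonormal_lincomb Q M P j (c : nat -> K) (f : nat -> vT) :
  (Q <= j < N)%N -> (forall k, (k < P)%N -> f k \in W) ->
  (forall k, (k < M)%N -> f k \in <<[seq u k | k <- iota 0 Q]>>%VS) ->
  ip (u j) (\sum_(k < P) c k *: f k) = \sum_(M <= k < P) c k * ip (u j) (f k).
Proof.
move=> j_in fW f_span; have uj_W : u j \in W by apply: u_W; case/andP: j_in.
rewrite ip_sumr // => [|k]; last exact: fW.
rewrite -(big_mkord xpredT (fun k => c k * ip (u j) (f k))).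
apply: big_nat_prefix0 => k k_lt.
by rewrite (ip_orthonormal_span_eq0 j_in (f_span k k_lt)) mulr0.
Qed.

Lemma orthonormal_expansion v : v \in <<[seq u k | k <- iota 0 N]>>%VS ->
  v = \sum_(k < N) ip (u k) v *: u k.
Proof.
case/span_iota_sum=> c ->; apply: eq_bigr => k _.
by rewrite ip_orthonormal_sum ?ltn_ord ?mul1r.
Qed.

Lemma orthonormal_expansion_tail M v : v \in <<[seq u k | k <- iota 0 N]>>%VS ->
  (forall k, (k < M)%N -> ip (u k) v = 0) ->
  v = \sum_(M <= k < N) ip (u k) v *: u k.
Proof.
move=> v_span v_perp; rewrite {1}(orthonormal_expansion v_span).
rewrite -(big_mkord xpredT (fun k => ip (u k) v *: u k)).
by apply: big_nat_prefix0 => k /v_perp ->; rewrite scale0r.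
Qed.

End OrthonormalFamily.
End InnerProductOnSubspace.

Section LinearOperator.
Variables (R : comNzRingType) (D : (R -> R) -> (R -> R)) (S : pred (R -> R)).
Hypothesis S_0 : S (fun _ => 0).
Hypothesis D_0 : D (fun _ => 0) = (fun _ => 0).
Hypothesis D_linear : forall (a : R) f g, S f -> S g ->
  S (fun s => a * f s + g s) /\ D (fun s => a * f s + g s) = (fun t => a * D f t + D g t).

Lemma D_lincomb (I : Type) (r : seq I) (f : I -> R -> R) (c : I -> R) :
  (forall k, S (f k)) ->
  S (fun s => \sum_(k <- r) f k s * c k) /\
  D (fun s => \sum_(k <- r) f k s * c k) = (fun t => \sum_(k <- r) D (f k) t * c k).
Proof.
move=> fS; elim: r => [|a r [IH_S IH_D]].
  have -> : (fun s => \sum_(k <- [::]) f k s * c k) = (fun _ => 0).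
    by apply: functional_extensionality => s; rewrite big_nil.
  by rewrite D_0; split=> //; apply: functional_extensionality => s; rewrite big_nil.
have -> : (fun s => \sum_(k <- a :: r) f k s * c k) =
          (fun s => c a * f a s + \sum_(k <- r) f k s * c k).
  by apply: functional_extensionality => s; rewrite big_cons mulrC.
have [-> ->] := D_linear (c a) (fS a) IH_S; split=> //.
by rewrite IH_D; apply: functional_extensionality => s; rewrite big_cons mulrC.
Qed.

Lemma compD_sum n (I : Type) (r : seq I) (x : R -> I -> R) (u : I -> 'cV[R]_n) t :
  (forall k, S (fun s => x s k)) ->
  compD D (fun s => \sum_(k <- r) x s k *: u k) t =
  \sum_(k <- r) D (fun s => x s k) t *: u k.
Proof.
move=> xS; apply/matrixP => i j; rewrite (ord1 j) /compD !mxE summxE.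
have -> : (fun s => (\sum_(k <- r) x s k *: u k) i 0) =
          (fun s => \sum_(k <- r) x s k * u k i 0).
  by apply: functional_extensionality => s; rewrite summxE; apply: eq_bigr => k _; rewrite mxE.
have [_ ->] := @D_lincomb _ r (fun k s => x s k) (fun k => u k i 0) xS.
by apply: eq_bigr => k _; rewrite mxE.
Qed.
End LinearOperator.

Theorem theorem3p1 (R : realFieldType) (n m : nat) (A : 'M[R]_n) (w : 'cV[R]_n)
  (T : R) (D : (R -> R) -> (R -> R)) (S : pred (R -> R))
  (V : nat -> {vspace 'cV[R]_n}) (ip : 'cV[R]_n -> 'cV[R]_n -> R)
  (u : nat -> 'cV[R]_n) (x : R -> nat -> R) :
  0 < T -> (0 < m)%N ->
  (* D is a linear operator on the class S of sufficiently smooth scalar functions *)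
  S (fun _ => 0) -> D (fun _ => 0) = (fun _ => 0) ->
  (forall (a : R) f g, S f -> S g ->
     S (fun s => a * f s + g s) /\
     D (fun s => a * f s + g s) = (fun t => a * D f t + D g t)) ->
  (* nested subspaces *)
  w \in V 1 ->
  (forall i, (1 <= i <= m)%N -> (V i <= V i.+1)%VS) ->
  (forall i, (1 <= i <= m)%N -> forall v, v \in V i -> A *m v \in V i.+1) ->
  (* <.,.>_* is an inner product on V_{m+1} *)
  (forall (a : R) v1 v2 z, v1 \in V m.+1 -> v2 \in V m.+1 -> z \in V m.+1 ->
     ip (a *: v1 + v2) z = a * ip v1 z + ip v2 z) ->
  (forall v1 v2, v1 \in V m.+1 -> v2 \in V m.+1 -> ip v1 v2 = ip v2 v1) ->
  (forall v, v \in V m.+1 -> v != 0 -> 0 < ip v v) ->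
  (* nested <.,.>_*-orthonormal basis u_0, ..., u_{d_{m+1}-1} *)
  (forall k l, (k < dimseq V m.+1)%N -> (l < dimseq V m.+1)%N ->
     ip (u k) (u l) = (k == l)%:R) ->
  (forall i, (1 <= i <= m.+1)%N ->
     (<<[seq u k | k <- iota 0 (dimseq V i)]>>%VS = V i)) ->
  (* coordinates x_m of y_m, sufficiently smooth *)
  (forall k, (k < dimseq V m)%N -> S (fun t => x t k)) ->
  let y := fun t => \sum_(k < dimseq V m) x t k *: u k in
  let r := fun t => - compD D y t - A *m y t + w in
  (* Galerkin condition *)
  (forall t, 0 <= t <= T -> forall v, v \in V m -> ip v (r t) = 0) ->
  forall t, 0 <= t <= T ->
    r t = \sum_(dimseq V m <= j < dimseq V m.+1)
            (- \sum_(dimseq V m.-1 <= k < dimseq V m)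
                 ip (u j) (A *m u k) * x t k) *: u j.
Proof.
(* After [case: m],
   [V m.+1] and [V m.+2] play the roles of the paper's V_m and V_{m+1}. *)
move=> _; case: m => // m _ S0 D0 D_linear w_V1 V_nested AV ip_linearl ipC _.
move=> u_orth u_span x_S y r galerkin t t_in.
have u_V i k : (0 < i <= m.+2)%N -> (k < dimseq V i)%N -> u k \in V i.
  by move=> i_in k_lt; rewrite -(u_span i i_in) memv_span // map_f // mem_iota.
have u_W k : (k < dimseq V m.+2)%N -> u k \in V m.+2 := u_V m.+2 k (leqnn _).
have in_W v : v \in V m.+1 -> v \in V m.+2 by apply/subvP/V_nested; rewrite /= leqnn.
have u_Vm (k : 'I_(dimseq V m.+1)) : u k \in V m.+1 := u_V m.+1 k (leqnSn _) (ltn_ord k).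
have y_Vm : y t \in V m.+1 by apply: rpred_sum => k _; rewrite memvZ.
have Dy_Vm : compD D y t \in V m.+1.
  rewrite (@compD_sum _ D S S0 D0 D_linear _ _ _
             (fun s (k : 'I_(dimseq V m.+1)) => x s k)).
    by apply: rpred_sum => k _; rewrite memvZ.
  by move=> k; apply: x_S.
have w_Vm : w \in V m.+1.
  exact: subvP (nested_subv V_nested (i := 1) (j := m.+1) isT (leqnSn _)) w w_V1.
have perp_Vm j v : (dimseq V m.+1 <= j < dimseq V m.+2)%N -> v \in V m.+1 -> ip (u j) v = 0.
  move=> j_in; rewrite -(u_span m.+1) ?leqnSn //.
  exact: (ip_orthonormal_span_eq0 ip_linearl ipC u_W u_orth j_in).
have Ay_W : A *m y t \in V m.+2 := AV m.+1 (leqnn _) _ y_Vm.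
have r_W : r t \in V m.+2 by rewrite /r rpredD ?rpredB ?rpredN ?Ay_W ?in_W.
rewrite {1}(orthonormal_expansion_tail ip_linearl ipC u_W u_orth
             (M := dimseq V m.+1) (v := r t)).
- apply: eq_big_nat => j j_in; congr (_ *: _).
  have uj_W : u j \in V m.+2 by apply: u_W; case/andP: j_in.
  have [Dy_W w_W] := (in_W _ Dy_Vm, in_W _ w_Vm).
  rewrite /r -addrA -[- compD D y t]scaleN1r -[- (A *m y t)]scaleN1r.
  rewrite !(ip_linearr ip_linearl ipC) ?rpredD ?memvZ //.
  rewrite (perp_Vm j _ j_in Dy_Vm) (perp_Vm j _ j_in w_Vm) mulr0 add0r addr0 mulN1r.
  rewrite /y mulmx_sumr; congr (- _).
  under eq_bigr do rewrite -scalemxAr.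
  rewrite (ip_orthonormal_lincomb ip_linearl ipC u_W u_orth (M := dimseq V m) (x t)
             (f := fun k => A *m u k) j_in).
  + by apply: eq_bigr => k _; rewrite mulrC.
  + by move=> k k_lt; apply: AV (u_Vm (Ordinal k_lt)); rewrite /= leqnn.
  move=> k k_lt; rewrite u_span ?leqnSn //.
  have [m0 | m_gt0] := posnP m; first by move: k_lt; rewrite m0.
  by apply: AV (u_V _ _ _ k_lt); rewrite ?m_gt0 ?leqW.
- by rewrite u_span ?leqnn.
by move=> k k_lt; rewrite galerkin ?u_V ?leqnSn.
Qed.
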